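(* Let $A$ be a metrizable abelian topological group and $D\le A$ a dense subgroup. Then the restriction map $\hat A\to\hat D$, $\chi\mapsto\chi|_D$, is an isomorphism of topological groups.
   Context: $\mathbb{T}=\mathbb{R}/\mathbb{Z}$. For an abelian topological group $B$, $\hat B$ is the group of continuous homomorphisms $B\to\mathbb{T}$ with the compact-open topology. *)

From HB Require Import structures.
From mathcomp Require Import all_boot all_order all_algebra.
From mathcomp Require Import generic_quotient.
From mathcomp Require Import all_classical all_reals.
From mathcomp Require Import topology tvs.

Set Implicit Arguments.
Unset Strict Implicit.
Unset Printing Implicit Defensive.

Import Order.TTheory GRing.Theory Num.Theory.
Import numFieldTopology.Exports.
Local Open Scope classical_set_scope.
Local Open Scope ring_scope.
Local Open Scope quotient_scope.

Section Torus.
Variable R : realType.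

Definition torus_rel (x y : R) : bool := (x - y) \is a Num.int.

Lemma torus_rel_refl : reflexive torus_rel.
Proof. by move=> x; rewrite /torus_rel subrr rpred0. Qed.

Lemma torus_rel_sym : symmetric torus_rel.
Proof. by move=> x y; rewrite /torus_rel -opprB rpredN. Qed.

Lemma torus_rel_trans : transitive torus_rel.
Proof.
move=> y x z; rewrite /torus_rel => h1 h2.
have -> : x - z = (x - y) + (y - z) by rewrite addrA subrK.
by rewrite rpredD.
Qed.

Definition torus_equiv :=
  EquivRel torus_rel torus_rel_refl torus_rel_sym torus_rel_trans.

Definition torusQ := {eq_quot torus_equiv}.

Definition torus : Type := quotient_topology torusQ.
HB.instance Definition _ := Topological.copy torus (quotient_topology torusQ).

Definition torus_pi (x : R) : torus := \pi_torusQ x.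
Definition torus_repr (a : torus) : R := repr (a : torusQ).

Lemma torus_piP (x y : R) : torus_pi x = torus_pi y <-> (x - y) \is a Num.int.
Proof.
rewrite /torus_pi; split; first by move=> /eqquotP.
by move=> h; apply/eqquotP.
Qed.

Lemma torus_reprK (a : torus) : torus_pi (torus_repr a) = a.
Proof. exact: reprK. Qed.

Lemma torus_pi_repr (x : R) : (torus_repr (torus_pi x) - x) \is a Num.int.
Proof. by apply/torus_piP; rewrite torus_reprK. Qed.

Definition torus_zero : torus := torus_pi 0.
Definition torus_opp (a : torus) : torus := torus_pi (- torus_repr a).
Definition torus_add (a b : torus) : torus :=
  torus_pi (torus_repr a + torus_repr b).

Lemma torus_add_pi (x y : R) :
  torus_add (torus_pi x) (torus_pi y) = torus_pi (x + y).
Proof.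
apply/torus_piP.
rewrite (_ : _ - _ = (torus_repr (torus_pi x) - x)
                   + (torus_repr (torus_pi y) - y)); last first.
  by rewrite opprD !addrA; congr (_ + _); rewrite -!addrA; congr (_ + _);
     rewrite addrC.
by rewrite rpredD ?torus_pi_repr.
Qed.

Lemma torus_opp_pi (x : R) : torus_opp (torus_pi x) = torus_pi (- x).
Proof.
apply/torus_piP; rewrite opprK.
rewrite (_ : _ + _ = - (torus_repr (torus_pi x) - x)); last by rewrite opprB addrC.
by rewrite rpredN torus_pi_repr.
Qed.

Lemma torus_ind (P : torus -> Prop) : (forall x, P (torus_pi x)) -> forall a, P a.
Proof. by move=> h a; rewrite -(torus_reprK a). Qed.

Lemma torus_addA : associative torus_add.
Proof.
move=> a b c; elim/torus_ind: a; move=> x; elim/torus_ind: b => y;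
elim/torus_ind: c => z; by rewrite !torus_add_pi addrA.
Qed.

Lemma torus_addC : commutative torus_add.
Proof.
move=> a b; elim/torus_ind: a => x; elim/torus_ind: b => y.
by rewrite !torus_add_pi addrC.
Qed.

Lemma torus_add0 : left_id torus_zero torus_add.
Proof. by move=> a; elim/torus_ind: a => x; rewrite /torus_zero torus_add_pi add0r. Qed.

Lemma torus_addN : left_inverse torus_zero torus_opp torus_add.
Proof.
move=> a; elim/torus_ind: a => x.
by rewrite torus_opp_pi torus_add_pi addNr.
Qed.

HB.instance Definition _ := GRing.isZmodule.Build torus
  torus_addA torus_addC torus_add0 torus_addN.

End Torus.

Definition metrizable (R : realType) (T : topologicalType) : Prop :=
  exists d : T -> T -> R,
    [/\ forall x y, 0 <= d x y,
        forall x y, d x y = 0 <-> x = y,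
        forall x y, d x y = d y x,
        forall x y z, d x z <= d x y + d y z &
        forall (x : T) (U : set T),
          nbhs x U <-> exists2 e : R, 0 < e & [set y | d x y < e] `<=` U].

Definition subgroup (A : zmodType) (D : set A) : Prop :=
  D 0 /\ (forall x y, D x -> D y -> D (x - y)).

Definition is_character (R : realType) (A : topologicalZmodType)
    (chi : A -> torus R) : Prop :=
  continuous chi /\ {morph chi : x y / x + y}.

(** continuous homomorphisms D -> T, for a subgroup D of A carrying the
    subspace topology (the topology on [set_type D] is the initial topology
    of the inclusion) *)
Definition is_character_on (R : realType) (A : topologicalZmodType)
    (D : set A) (psi : set_type D -> torus R) : Prop :=
  continuous psi /\
  (forall x y z : set_type D, set_val z = set_val x + set_val y ->
     psi z = psi x + psi y).

Definition dual (R : realType) (A : topologicalZmodType) :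
    set {compact-open, A -> torus R} :=
  [set chi | is_character chi].

Definition dual_on (R : realType) (A : topologicalZmodType) (D : set A) :
    set {compact-open, set_type D -> torus R} :=
  [set psi | is_character_on psi].

Definition restriction (R : realType) (A : topologicalZmodType) (D : set A)
    (chi : {compact-open, A -> torus R}) : {compact-open, set_type D -> torus R} :=
  fun x => chi (set_val x).

(* A character of the dense subgroup D is uniformly continuous, so it extends
   by continuity, T being compact, to a character of A; this inverts the
   restriction map, which is continuous because compact subsets of D are
   compact in A.  The substance is the continuity of the extension map.  Write
   |t| for the distance of t in T to 0.  Given a compact K in A and eps > 0,
   one builds a compact L in D, a sequence tending to 0 made of the multiples
   2^j c (j <= k + m) of the differences c of consecutive finite D-nets of K at
   scale k, such that every continuous character g with |g| < 1/4 on L has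
   |g| <= eps on K: since |2a| = 2|a| when |a| <= 1/4, smallness of the
   g(2^j c) forces |g(c)| <= 2^-(k+m)/4, and the differences telescope along a
   net converging to any x in K.  Metrizability provides the countable
   neighbourhood base that drives the construction. *)

From HB Require Import structures.
From mathcomp Require Import all_boot all_order all_algebra.
From mathcomp Require Import all_classical all_reals.
From mathcomp Require Import topology tvs normedtype set_interval.
From mathcomp Require Import ring lra finmap interval_inference.

Set Implicit Arguments.
Unset Strict Implicit.
Unset Printing Implicit Defensive.

Import Order.TTheory GRing.Theory Num.Theory.
Import numFieldTopology.Exports.
Local Open Scope classical_set_scope.
Local Open Scope ring_scope.

Section DistanceToIntegers.
Variable R : realType.
Implicit Types x y k : R.

Definition nearest_int x : R := (Num.floor (x + 2^-1))%:~R.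
Definition distZ x : R := `|x - nearest_int x|.

Lemma nearest_int_int x : nearest_int x \is a Num.int.
Proof. exact: intr_int. Qed.

Lemma distZ_ge0 x : 0 <= distZ x. Proof. exact: normr_ge0. Qed.

Lemma distZ_le_half x : distZ x <= 2^-1.
Proof.
have /andP[h1 h2] := floor_itv (x + 2^-1).
by rewrite /distZ ler_norml /nearest_int; rewrite intrD in h2; apply/andP; split; lra.
Qed.

Lemma intr_neq_distr_ge1 k k' : k \is a Num.int -> k' \is a Num.int -> k != k' ->
  1 <= `|k - k'|.
Proof. by move=> hk hk' hne; rewrite norm_intr_ge1 ?rpredB ?subr_eq0. Qed.

(* Any other integer is at distance at least 1 from [nearest_int x], which is
   itself within 1/2 of [x]. *)
Lemma distZ_le x k : k \is a Num.int -> distZ x <= `|x - k|.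
Proof.
move=> hk; have [->|hne] := eqVneq k (nearest_int x); first by [].
have h1 := intr_neq_distr_ge1 hk (nearest_int_int x) hne.
have h2 : `|k - nearest_int x| <= `|x - k| + `|x - nearest_int x|.
  rewrite (_ : k - nearest_int x = - (x - k) + (x - nearest_int x)); last by ring.
  by rewrite -(normrN (x - k)) ler_normD.
have := distZ_le_half x; rewrite /distZ; lra.
Qed.

Lemma distZ_addz x k : k \is a Num.int -> distZ (x + k) = distZ x.
Proof.
move=> hk; apply/eqP; rewrite eq_le; apply/andP; split.
  apply: le_trans (distZ_le _ (rpredD (nearest_int_int x) hk)) _.
  by rewrite (_ : x + k - (nearest_int x + k) = x - nearest_int x) //; ring.
apply: le_trans (distZ_le _ (rpredB (nearest_int_int (x + k)) hk)) _.
by rewrite (_ : x - (nearest_int (x + k) - k) = x + k - nearest_int (x + k)) //; ring.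
Qed.

Lemma distZN x : distZ (- x) = distZ x.
Proof.
have le_distZN y : distZ (- y) <= distZ y.
  have hN : - nearest_int y \is a Num.int by rewrite rpredN nearest_int_int.
  by apply: le_trans (distZ_le _ hN) _; rewrite -opprD normrN.
by apply/eqP; rewrite eq_le le_distZN /= -{1}(opprK x) le_distZN.
Qed.

Lemma distZD x y : distZ (x + y) <= distZ x + distZ y.
Proof.
apply: le_trans (distZ_le _ (rpredD (nearest_int_int x) (nearest_int_int y))) _.
rewrite (_ : x + y - _ = (x - nearest_int x) + (y - nearest_int y)); last by ring.
exact: ler_normD.
Qed.

Lemma distZ_le_norm x : distZ x <= `|x|.
Proof. by have := distZ_le x (rpred0 _); rewrite subr0. Qed.

Lemma distZ_norm x : `|x| <= 2^-1 -> distZ x = `|x|.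
Proof.
move=> hx; apply/eqP; rewrite eq_le distZ_le_norm /=.
have [h0|hne] := eqVneq (nearest_int x) 0; first by rewrite /distZ h0 subr0.
have := intr_neq_distr_ge1 (nearest_int_int x) (rpred0 _) hne; rewrite subr0.
have := ler_normB x (x - nearest_int x); rewrite opprB addrC subrK /distZ.
lra.
Qed.

Lemma distZ_eq0 x : distZ x = 0 -> x \is a Num.int.
Proof. by move/eqP; rewrite normr_eq0 subr_eq0 => /eqP ->; exact: nearest_int_int. Qed.

Lemma distZ_double x : distZ x <= 4^-1 -> distZ (x + x) = 2 * distZ x.
Proof.
move=> hx; set n := nearest_int x; have hn : n \is a Num.int := nearest_int_int x.
have e : x + x - (n + n) = 2 * (x - n) by ring.
apply/eqP; rewrite eq_le; apply/andP; split.
  by apply: le_trans (distZ_le _ (rpredD hn hn)) _; rewrite e normrM ger0_norm.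
have [he|hne] := eqVneq (nearest_int (x + x)) (n + n).
  by rewrite /distZ he e normrM ger0_norm.
have h1 := intr_neq_distr_ge1 (nearest_int_int (x + x)) (rpredD hn hn) hne.
have h2 : `|nearest_int (x + x) - (n + n)| <= distZ (x + x) + 2 * distZ x.
  rewrite /distZ (_ : nearest_int (x + x) - (n + n) =
     - (x + x - nearest_int (x + x)) + 2 * (x - n)); last by ring.
  by apply: le_trans (ler_normD _ _) _; rewrite normrN normrM ger0_norm.
lra.
Qed.

End DistanceToIntegers.

Section TorusNorm.
Variable R : realType.
Local Notation T := (torus R).
Local Notation pi := (@torus_pi R).

Lemma torus_piD (x y : R) : pi x + pi y = pi (x + y).
Proof. exact: torus_add_pi. Qed.

Lemma torus_piB (x y : R) : pi x - pi y = pi (x - y).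
Proof. by rewrite [- _]torus_opp_pi torus_piD. Qed.

Lemma torus_pi_int (k : R) : k \is a Num.int -> pi k = 0.
Proof. by move=> hk; apply/torus_piP; rewrite subr0. Qed.

Definition tnorm (t : T) : R := distZ (torus_repr t).

Lemma tnorm_pi x : tnorm (pi x) = distZ x.
Proof.
rewrite /tnorm -(distZ_addz x (torus_pi_repr x)).
by congr distZ; rewrite addrC subrK.
Qed.

Lemma tnorm_ge0 t : 0 <= tnorm t. Proof. exact: distZ_ge0. Qed.

Lemma tnormD a b : tnorm (a + b) <= tnorm a + tnorm b.
Proof.
by elim/torus_ind: a => x; elim/torus_ind: b => y; rewrite torus_piD !tnorm_pi distZD.
Qed.

Lemma tnormN a : tnorm (- a) = tnorm a.
Proof. by elim/torus_ind: a => x; rewrite [- _]torus_opp_pi !tnorm_pi distZN. Qed.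

Lemma tnorm0 : tnorm 0 = 0.
Proof. by rewrite -[0]/(pi 0) tnorm_pi distZ_norm normr0 //; lra. Qed.

Lemma tnorm_eq0 a : tnorm a = 0 -> a = 0.
Proof. by elim/torus_ind: a => x; rewrite tnorm_pi => /distZ_eq0 /torus_pi_int. Qed.

Lemma tnormBC a b : tnorm (a - b) = tnorm (b - a).
Proof. by rewrite -tnormN opprB. Qed.

Lemma tnorm_triangle a b c : tnorm (a - c) <= tnorm (a - b) + tnorm (b - c).
Proof. by rewrite (_ : a - c = (a - b) + (b - c)) ?tnormD // addrA subrK. Qed.

Lemma tnorm_double a : tnorm a <= 4^-1 -> tnorm (a + a) = 2 * tnorm a.
Proof. by elim/torus_ind: a => x; rewrite torus_piD !tnorm_pi; exact: distZ_double. Qed.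

Lemma tnorm_lift a : exists2 x, pi x = a & `|x| = tnorm a.
Proof.
exists (torus_repr a - nearest_int (torus_repr a)) => //.
by rewrite -torus_piB torus_reprK (torus_pi_int (nearest_int_int _)) subr0.
Qed.

Lemma torus_eq a b : (forall e : R, 0 < e -> tnorm (a - b) < e) -> a = b.
Proof.
move=> h; apply/eqP; rewrite -subr_eq0; apply/eqP/tnorm_eq0.
apply/eqP; rewrite eq_le tnorm_ge0 andbT; apply/ler_addgt0Pr => e e0.
by rewrite add0r ltW ?h.
Qed.

Definition tball (t : T) (e : R) := [set u : T | tnorm (u - t) < e].

Lemma tball_open (t : T) e : open (tball t e).
Proof.
elim/torus_ind: t => r.
rewrite /open /= /quotient_open openE => x0 /=.
rewrite /tball /= torus_piB tnorm_pi => h0.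
apply/(@nbhs_normP R R^o x0); exists (e - distZ (x0 - r)); first by rewrite /= subr_gt0.
move=> y /= hy; rewrite /tball /= torus_piB tnorm_pi.
have := distZD (x0 - r) (y - x0); rewrite addrC subrKA.
have := distZ_le_norm (y - x0); rewrite distrC in hy; lra.
Qed.

Lemma nbhs_torusP (t : T) (U : set T) :
  nbhs t U <-> exists2 e : R, 0 < e & tball t e `<=` U.
Proof.
split; last first.
  move=> [e e0 hU]; rewrite nbhsE; exists (tball t e) => //.
  by split; [exact: tball_open | rewrite /tball /= subrr tnorm0].
rewrite nbhsE => -[B [oB Bt] BU].
move: Bt oB; elim/torus_ind: t => r Br.
rewrite /open /= /quotient_open openE => /(_ r Br) /(@nbhs_normP R R^o r) [e e0 he].
exists e => // u hu; have [z hz1 hz2] := tnorm_lift (u - pi r).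
apply: BU; have -> : u = pi (r + z) by rewrite -torus_piD hz1 addrC subrK.
by apply: he => /=; rewrite opprD addNKr normrN hz2.
Qed.

Lemma cvg_torusP {I : Type} (F : set_system I) (f : I -> T) (t : T) : Filter F ->
  f @ F --> t <-> forall e : R, 0 < e -> \forall i \near F, tnorm (f i - t) < e.
Proof.
move=> FF; split=> [ft e e0|h U /nbhs_torusP [e e0 hU]].
  by have /ft : nbhs t (tball t e) by apply/nbhs_torusP; exists e.
by apply: filterS (h e e0) => i /hU.
Qed.

Lemma torus_cvg_unique {I : Type} (F : set_system I) (f : I -> T) (a b : T) :
  ProperFilter F -> f @ F --> a -> f @ F --> b -> a = b.
Proof.
move=> PF /cvg_torusP ha /cvg_torusP hb; apply: torus_eq => e e0.
have e2 : 0 < e / 2 by rewrite divr_gt0.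
have [i [h1 h2]] := filter_ex (filterI (ha _ e2) (hb _ e2)).
have := tnorm_triangle a (f i) b; rewrite [tnorm (a - f i)]tnormBC; lra.
Qed.

Lemma torus_cvgB {I : Type} (F : set_system I) (f g : I -> T) (a b : T) :
  Filter F -> f @ F --> a -> g @ F --> b -> (fun i => f i - g i) @ F --> a - b.
Proof.
move=> FF /cvg_torusP ha /cvg_torusP hb; apply/cvg_torusP => e e0.
have e2 : 0 < e / 2 by rewrite divr_gt0.
apply: filterS (filterI (ha _ e2) (hb _ e2)).
move=> i [h1 h2].
rewrite (_ : _ - _ = (f i - a) - (g i - b)); last first.
  by rewrite !opprB [b - a]addrC addrACA [b - _]addrC.
by apply: le_lt_trans (tnormD _ _) _; rewrite tnormN; lra.
Qed.

Lemma torus_compact : compact [set: T].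
Proof.
have -> : [set: T] = pi @` `[0, 1]%classic.
  apply/seteqP; split => // a _.
  exists (torus_repr a - (Num.floor (torus_repr a))%:~R).
    have /andP[h1 h2] := floor_itv (torus_repr a).
    by rewrite /= in_itv /=; rewrite intrD in h2; apply/andP; split; lra.
  by rewrite -torus_piB torus_reprK torus_pi_int ?intr_int // subr0.
apply: continuous_compact; last exact: segment_compact.
by apply: continuous_subspaceT; exact: pi_continuous.
Qed.

End TorusNorm.

Section SubgroupExtension.
Variables (R : realType) (A : topologicalZmodType) (D : set A).
Hypothesis subD : subgroup D.
Hypothesis denseD : dense D.
Local Notation T := (torus R).
Local Notation sD := (set_type D).

Lemma subgroup0 : D 0. Proof. by case: subD. Qed.

Lemma subgroupB a b : D a -> D b -> D (a - b). Proof. by case: subD => _; apply. Qed.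

Lemma subgroupD a b : D a -> D b -> D (a + b).
Proof. by move=> Da Db; have := subgroupB Da (subgroupB subgroup0 Db); rewrite sub0r opprK. Qed.

Lemma subgroupMn a n : D a -> D (a *+ n).
Proof.
move=> Da; elim: n => [|n IH]; first by rewrite mulr0n; exact: subgroup0.
by rewrite mulrS; exact: subgroupD.
Qed.

Definition in_sub (a : A) (Da : D a) : sD := SigSub (mem_set Da).

Lemma in_subK a (Da : D a) : set_val (in_sub Da) = a. Proof. by []. Qed.

Lemma set_val_in (d : sD) : D (set_val d). Proof. exact: set_valP. Qed.

Lemma set_val_inj (d d' : sD) : set_val d = set_val d' -> d = d'.
Proof. exact: val_inj. Qed.

Lemma dense_nbhs (x : A) (V : set A) : nbhs x V -> exists d : sD, V (set_val d).
Proof.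
rewrite nbhsE => -[B [oB Bx] BV].
have [a [Ba Da]] := denseD (ex_intro _ x Bx) oB.
by exists (in_sub Da); exact: BV.
Qed.

Lemma nbhs_set_typeP (d : sD) (U : set sD) :
  nbhs d U <-> exists2 V, nbhs (set_val d) V & forall d', V (set_val d') -> U d'.
Proof.
rewrite subspace_subtypeP {1}/nbhs /= -nbhs_subspace_in; last exact: set_val_in.
split=> [h|[V nV hV]].
  exists (fun y => D y -> (set_val @` U) y); first by rewrite /within in h.
  by move=> d' /(_ (set_val_in d')) [u Uu /set_val_inj <-].
rewrite /within; apply: filterS nV => y Vy Dy.
by exists (in_sub Dy) => //; apply: hV.
Qed.

Lemma set_val_continuous : continuous (set_val : sD -> A).
Proof. by move=> d U nU; apply/nbhs_set_typeP; exists U. Qed.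

Definition trace_nbhs (x : A) : set_system sD :=
  [set U | exists2 V, nbhs x V & forall d : sD, V (set_val d) -> U d].

#[local] Instance trace_nbhs_proper x : ProperFilter (trace_nbhs x).
Proof.
split; first by move=> [V /dense_nbhs [d Vd] hV]; exact: (hV d Vd).
split.
- by exists setT => //; exact: filterT.
- move=> P Q [V nV hV] [W nW hW]; exists (V `&` W); first exact: filterI.
  by move=> d [? ?]; split; auto.
- by move=> P Q PQ [V nV hV]; exists V => // d /hV; exact: PQ.
Qed.

Definition is_hom_on (psi : sD -> T) :=
  forall x y z : sD, set_val z = set_val x + set_val y -> psi z = psi x + psi y.

Section HomOn.
Variable psi : sD -> T.
Hypotheses (psi_cont : continuous psi) (psi_hom : is_hom_on psi).

Lemma hom_onB (d d' z : sD) :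
  set_val z = set_val d - set_val d' -> psi z = psi d - psi d'.
Proof.
move=> hz; have /psi_hom -> : set_val d = set_val z + set_val d' by rewrite hz subrK.
by rewrite addrK.
Qed.

Lemma hom_on0 (z : sD) : set_val z = 0 -> psi z = 0.
Proof. by move=> hz; rewrite (@hom_onB z z z) ?subrr // hz subrr. Qed.

(* Continuity at [0] of a homomorphism is uniform continuity. *)
Lemma hom_on_cauchy (x : A) (e : R) : 0 < e ->
  exists2 V, nbhs x V & forall d d' : sD, V (set_val d) -> V (set_val d') ->
     tnorm (psi d - psi d') < e.
Proof.
move=> e0; pose z0 := in_sub subgroup0.
have : nbhs z0 (psi @^-1` tball (psi z0) e).
  by apply: psi_cont; apply/nbhs_torusP; exists e.
case/nbhs_set_typeP => V0 nV0 hV0.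
have := @sub_continuous A (x, x) V0; rewrite /= subrr => /(_ nV0).
case=> -[P Q] /= [nP nQ] PQ.
exists (P `&` Q); first exact: filterI.
move=> d d' [Pd _] [_ Qd'].
have Dd := subgroupB (set_val_in d) (set_val_in d').
have := hV0 (in_sub Dd) (PQ (_, _) (conj Pd Qd')).
by rewrite /tball /= (hom_on0 (in_subK subgroup0)) subr0 (hom_onB (in_subK Dd)).
Qed.

Definition extension (x : A) : T :=
  xget (0 : T) (fun t : T => psi @ trace_nbhs x --> t).

Lemma extension_cvg x : psi @ trace_nbhs x --> extension x.
Proof.
apply: (xgetPex (0 : T) (P := fun t : T => psi @ trace_nbhs x --> t)).
have [t [_ ct]] := torus_compact (fmap_proper_filter psi (trace_nbhs_proper x)) filterT.
exists t; apply/cvg_torusP => e e0.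
have e2 : 0 < e / 2 by rewrite divr_gt0.
have [V nV hV] := hom_on_cauchy x e2.
have : (psi @ trace_nbhs x) (psi @` [set d | V (set_val d)]).
  by exists V => // d Vd /=; exists d.
have nb : nbhs t (tball t (e / 2)) by apply/nbhs_torusP; exists (e / 2).
move=> /ct /(_ nb) [u [[d0 Vd0 <-] hu]].
exists V => // d Vd.
have := tnorm_triangle (psi d) (psi d0) t; have := hV _ _ Vd Vd0.
rewrite /tball /= in hu; lra.
Qed.

Lemma extension_near (x : A) (e : R) : 0 < e ->
  exists2 V, nbhs x V & forall d : sD, V (set_val d) -> tnorm (psi d - extension x) < e.
Proof. by move=> e0; have /cvg_torusP /(_ e e0) [V nV hV] := @extension_cvg x; exists V. Qed.

Lemma extension_set_val d : extension (set_val d) = psi d.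
Proof.
apply: (torus_cvg_unique _ (@extension_cvg (set_val d))).
by move=> U /psi_cont /nbhs_set_typeP [V nV hV]; exists V.
Qed.

Lemma extension_unique (chi : A -> T) : continuous chi ->
  (forall d, psi d = chi (set_val d)) -> extension = chi.
Proof.
move=> chi_cont psi_chi; apply/funext => x.
apply: (torus_cvg_unique _ (@extension_cvg x)).
by move=> U /chi_cont nU; exists (chi @^-1` U) => // d; rewrite /= psi_chi.
Qed.

Lemma extensionD : {morph extension : x y / x + y}.
Proof.
move=> x y; apply: torus_eq => e e0.
have e3 : 0 < e / 3 by rewrite divr_gt0.
have [V1 nV1 h1] := extension_near x e3.
have [V2 nV2 h2] := extension_near y e3.
have [V3 nV3 h3] := extension_near (x + y) e3.
have [[P Q] /= [nP nQ] PQ] := @add_continuous A (x, y) V3 nV3.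
have [d1 [V1d1 Pd1]] := dense_nbhs (filterI nV1 nP).
have [d2 [V2d2 Qd2]] := dense_nbhs (filterI nV2 nQ).
have Dd := subgroupD (set_val_in d1) (set_val_in d2).
have := h3 (in_sub Dd) (PQ (_, _) (conj Pd1 Qd2)).
rewrite (psi_hom (in_subK Dd)) => h.
have := h1 _ V1d1; have := h2 _ V2d2.
set a := extension x; set b := extension y; set c := extension (x + y).
have -> : c - (a + b) = - (psi d1 + psi d2 - c) + (psi d1 - a) + (psi d2 - b).
  rewrite opprB -!addrA; congr (_ + _).
  by rewrite (opprD (psi d1)) addrACA addNr add0r addrCA addKr opprD.
have := tnormD (- (psi d1 + psi d2 - c) + (psi d1 - a)) (psi d2 - b).
have := tnormD (- (psi d1 + psi d2 - c)) (psi d1 - a); rewrite tnormN.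
lra.
Qed.

Lemma extension_continuous : continuous extension.
Proof.
move=> x; apply/cvg_torusP => e e0.
have e2 : 0 < e / 2 by rewrite divr_gt0.
have [V nV hV] := extension_near x e2.
move: (nV); rewrite nbhsE => -[B [oB Bx] BV].
near=> y.
have By : B y by near: y; apply: open_nbhs_nbhs.
have nBy : nbhs y V by apply: filterS BV _; apply: open_nbhs_nbhs.
have [V' nV' hV'] := extension_near y e2.
have [d [Vd V'd]] := dense_nbhs (filterI nBy nV').
have := hV _ Vd; have := hV' _ V'd.
have := tnorm_triangle (extension y) (psi d) (extension x).
have := tnormBC (extension y) (psi d); lra.
Unshelve. all: by end_near. Qed.

End HomOn.

End SubgroupExtension.

Section CompactOpen.
Variable R : realType.
Local Notation T := (torus R).

Lemma nbhs_tnorm (X : topologicalType) (f : X -> T) (x : X) (e : R) :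
  {for x, continuous f} -> 0 < e -> nbhs x [set y | tnorm (f y - f x) < e].
Proof.
move=> fx e0; have /fx : nbhs (f x) (tball (f x) e) by apply/nbhs_torusP; exists e.
by [].
Qed.

Lemma near_compact_open_uniform (X : topologicalType) (psi0 : X -> T) (L : set X)
    (d : R) : continuous psi0 -> compact L -> 0 < d ->
  \forall psi \near (psi0 : {compact-open, X -> T}),
     forall l, L l -> tnorm (psi l - psi0 l) < d.
Proof.
move=> psi0_cont cL d0.
have cw : near_covering_within L.
  by apply/near_covering_withinP; apply/compact_near_coveringP.
have d3 : 0 < d / 3 by rewrite divr_gt0.
apply: (cw _ (nbhs (psi0 : {compact-open, X -> T}))
           (fun psi l => tnorm (psi l - psi0 l) < d)).
move=> l Ll; pose W := [set y | tnorm (psi0 y - psi0 l) < d / 3].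
have nW : nbhs l W := nbhs_tnorm (psi0_cont l) d3.
pose C := L `&` closure W.
have cC : compact C by apply: compact_closedI => //; exact: closed_closure.
pose O := tball (psi0 l) (2 * (d / 3)).
have CO : psi0 @` C `<=` O.
  move=> _ [y [_ cy] <-]; rewrite /O /tball /=.
  have [z [Wz hz]] := cy _ (nbhs_tnorm (psi0_cont y) d3).
  have := tnorm_triangle (psi0 y) (psi0 z) (psi0 l); rewrite /W /= in Wz hz.
  have := tnormBC (psi0 z) (psi0 y); lra.
exists (W, [set g : {compact-open, X -> T} | g @` C `<=` O]).
  have oO : open O by exact: tball_open.
  by split => //=; apply: open_nbhs_nbhs; split => //; exact: compact_open_open.
case=> l' g /= [Wl' gC] Ll'.
have : O (g l') by apply: gC; exists l' => //; split => //; exact: subset_closure.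
rewrite /O /tball /= => h.
have := tnorm_triangle (g l') (psi0 l) (psi0 l'); have := tnormBC (psi0 l) (psi0 l').
rewrite /W /= in Wl'; lra.
Qed.

Lemma torus_lebesgue_number (X : topologicalType) (chi : X -> T) (K : set X)
    (O : set T) : continuous chi -> compact K -> open O -> chi @` K `<=` O ->
  exists2 e : R, 0 < e & forall x, K x -> tball (chi x) e `<=` O.
Proof.
move=> chi_cont cK oO KO.
have cw : near_covering_within K.
  by apply/near_covering_withinP; apply/compact_near_coveringP.
have near_O x : K x -> \forall x' \near x & e \near (0 : R)^'+,
    K x' -> tball (chi x') e `<=` O.
  move=> Kx; have : nbhs (chi x) O by apply: open_nbhs_nbhs; split => //; apply: KO; exists x.
  case/nbhs_torusP => h h0 hO.
  have h2 : 0 < h / 2 by rewrite divr_gt0.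
  exists ([set y | tnorm (chi y - chi x) < h / 2], [set e | e < h / 2]).
    by split => //=; [exact: nbhs_tnorm (chi_cont x) h2 | exact: nbhs_right_lt].
  case=> x' e /= [hx' he] Kx' u; rewrite /tball /= => hu; apply: hO.
  by rewrite /tball /=; have := tnorm_triangle u (chi x') (chi x); lra.
have := cw _ (nbhs (0 : R)^'+) (fun e x => tball (chi x) e `<=` O) _.
move=> /(_ _ near_O) hK; have [e [e0 he]] := filter_ex (filterI (nbhs_right_gt (0 : R)) hK).
by exists e.
Qed.

End CompactOpen.

Section ZmodTopology.
Variable A : topologicalZmodType.

Lemma continuous_subl (x : A) : continuous (fun y : A => x - y).
Proof.
move=> y; apply: (@continuous_comp _ _ _ (fun y => (x, y)) (fun p : A * A => p.1 - p.2)).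
  by apply: cvg_pair; [exact: cvg_cst | exact: cvg_id].
exact: sub_continuous.
Qed.

Lemma continuous_subr (x : A) : continuous (fun y : A => y - x).
Proof.
move=> y; apply: (@continuous_comp _ _ _ (fun y => (y, x)) (fun p : A * A => p.1 - p.2)).
  by apply: cvg_pair; [exact: cvg_id | exact: cvg_cst].
exact: sub_continuous.
Qed.

Lemma continuous_natmul (n : nat) : continuous (fun y : A => y *+ n).
Proof.
elim: n => [|n IH] y.
  by under [fun _ => _]funext do rewrite mulr0n; exact: cst_continuous.
under [fun _ => _]funext do rewrite mulrS.
apply: (@continuous_comp _ _ _ (fun y => (y, y *+ n)) (fun p : A * A => p.1 + p.2)).
  by apply: cvg_pair; [exact: cvg_id | exact: IH].
exact: add_continuous.
Qed.

(* [compact_cover] is stated for pointed spaces. *)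
#[local] HB.instance Definition _ := isPointed.Build A 0.

Lemma dense_finite_net (D : set A) (K U : set A) : dense D -> compact K -> nbhs 0 U ->
  exists2 F : set A, finite_set F /\ F `<=` D & forall x, K x -> exists2 f, F f & U (x - f).
Proof.
move=> denseD; rewrite compact_cover => cK nU.
pose cell (d : A) := (fun x => x - d) @^-1` U°.
have [|x Kx|F FD KF] := cK A D cell.
- move=> d _; apply: open_comp; last exact: open_interior.
  by move=> x _; exact: continuous_subr.
- have : nbhs x ((fun y => x - y) @^-1` U°).
    by apply: continuous_subl; rewrite subrr; exact: nbhs_interior.
  rewrite nbhsE => -[B [oB Bx] BU].
  by have [d [Bd Dd]] := denseD B (ex_intro _ x Bx) oB; exists d => //; exact: BU.
exists [set` F]; first by split; [exact: finite_fset | move=> d /FD /set_mem].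
by move=> x /KF [d Fd /interior_subset]; exists d.
Qed.

End ZmodTopology.

Lemma compact_setU1_bigcup (X : topologicalType) (p : X) (S : nat -> set X) :
  (forall k, finite_set (S k)) ->
  (forall U, nbhs p U -> exists n, forall k, (n < k)%N -> S k `<=` U) ->
  compact ([set p] `|` \bigcup_k S k).
Proof.
move=> S_fin S_to_p G PG GL.
have [pG|] := pselect (cluster G p); first by exists p; split => //; left.
rewrite /cluster /= => /existsNP [E /existsNP [B /not_implyP [GE]]].
move=> /not_implyP [nB EB0].
have [n Sn] := S_to_p B nB.
pose Phi := [set p] `|` \bigcup_(k in `I_n.+1) S k.
have Phi_fin : finite_set Phi.
  rewrite finite_setU; split; first exact: finite_set1.
  by apply: bigcup_finite => // k _; exact: S_fin.
have GPhi : G Phi.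
  apply: filterS (filterI GL GE) => y [[->|[k _ Sky]] Ey]; first by left.
  have [kn|nk] := ltnP k n.+1; first by right; exists k.
  by exfalso; apply: EB0; exists y; split => //; exact: Sn nk _ Sky.
have [q [Phiq cq]] := finite_compact Phi_fin PG GPhi.
by exists q; split => //; case: Phiq => [->|[k _ Skq]]; [left | right; exists k].
Qed.

Section TorusEstimates.
Variable R : realType.
Local Notation T := (torus R).

Lemma tnorm_doubling (m : nat) (a : T) :
  (forall j, (j <= m)%N -> tnorm (a *+ 2 ^ j) < 4^-1) -> tnorm a * 2 ^+ m <= 4^-1.
Proof.
elim: m a => [|m IH] a small.
  by rewrite expr0 mulr1 ltW //; have := small 0%N (leqnn _); rewrite expn0 mulr1n.
have a_small : tnorm a <= 4^-1.
  by rewrite ltW //; have := small 0%N (leq0n _); rewrite expn0 mulr1n.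
have : tnorm (a + a) * 2 ^+ m <= 4^-1.
  by apply: IH => j hj; rewrite -mulr2n -mulrnA -expnS; apply: small.
by rewrite tnorm_double // exprS mulrA [tnorm a * 2]mulrC.
Qed.

Lemma tnorm_sum_geometric (a : nat -> T) (eps : R) :
  (forall k, tnorm (a k) * 2 ^+ k <= eps) -> forall n, tnorm (\sum_(i < n) a i) <= 2 * eps.
Proof.
move=> ha n.
suff : tnorm (\sum_(i < n) a i) * 2 ^+ n <= eps * (2 ^+ n.+1 - 2).
  have eps_ge0 : 0 <= eps.
    by apply: le_trans (ha 0%N); rewrite expr0 mulr1 tnorm_ge0.
  have := tnorm_ge0 (\sum_(i < n) a i); have : 0 < (2 : R) ^+ n by rewrite exprn_gt0.
  rewrite exprS; nra.
elim: n => [|n IH]; first by rewrite big_ord0 tnorm0 mul0r expr1 subrr mulr0.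
rewrite big_ord_recr /=; have pos2n : 0 <= (2 : R) ^+ n by rewrite exprn_ge0.
have := ler_wpM2r pos2n (tnormD (\sum_(i < n) a i) (a n)).
move: IH (ha n); rewrite !exprS; lra.
Qed.

End TorusEstimates.

Lemma morphD0 (U V : zmodType) (g : U -> V) : {morph g : x y / x + y} -> g 0 = 0.
Proof. by move=> gD; apply/(@addrI _ (g 0)); rewrite -gD !addr0. Qed.

Lemma morphDMn (U V : zmodType) (g : U -> V) : {morph g : x y / x + y} ->
  forall x n, g (x *+ n) = g x *+ n.
Proof.
move=> gD x; elim=> [|n IH]; first by rewrite !mulr0n morphD0.
by rewrite !mulrS gD IH.
Qed.

Section PolarApproximation.
Variables (R : realType) (A : topologicalZmodType) (D : set A).
Hypotheses (subD : subgroup D) (denseD : dense D).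
Variable dist : A -> A -> R.
Hypothesis nbhs_dist : forall (x : A) (U : set A),
  nbhs x U <-> exists2 e : R, 0 < e & [set y | dist x y < e] `<=` U.
Local Notation T := (torus R).

Definition ball0 (n : nat) : set A := [set y | dist 0 y < n.+1%:R^-1].

Lemma nbhs_ball0 n : nbhs 0 (ball0 n).
Proof. by apply/nbhs_dist; exists n.+1%:R^-1 => //; rewrite invr_gt0 ltr0Sn. Qed.

Lemma ball0_le m n : (m <= n)%N -> ball0 n `<=` ball0 m.
Proof.
move=> mn y /lt_le_trans; apply.
by rewrite lef_pV2 ?posrE ?ltr0Sn // ler_nat.
Qed.

Lemma nbhs0_ball0 U : nbhs 0 U -> exists n, ball0 n `<=` U.
Proof.
case/nbhs_dist => e e0 hU.
have [N _ /(_ N (leqnn N)) hN] := near_infty_natSinv_lt (PosNum e0).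
by exists N => y /lt_trans /(_ hN) /hU.
Qed.

Definition dyadic_ball (m k : nat) : set A :=
  [set y | forall j, (j <= k + m)%N -> ball0 k (y *+ 2 ^ j)].

Lemma nbhs_dyadic_ball m k : nbhs 0 (dyadic_ball m k).
Proof.
have : \forall y \near 0, forall j : 'I_(k + m).+1, ball0 k (y *+ 2 ^ j).
  apply: filter_forall => j.
  by have := @continuous_natmul A (2 ^ j) 0 (ball0 k); rewrite mul0rn; apply; exact: nbhs_ball0.
by apply: filterS => y hy j jle; exact: (hy (Ordinal (jle : j < (k + m).+1)%N)).
Qed.

Section Construction.
Variables (K : set A) (m : nat) (V F : nat -> set A).
Hypotheses (V_ball : forall k, V k `<=` ball0 k)
  (V_sub : forall k a b, V k a -> V k b -> dyadic_ball m k.+1 (a - b))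
  (F_fin : forall k, finite_set (F k)) (F_D : forall k, F k `<=` D)
  (F_net : forall k x, K x -> exists2 f, F k f & (V k `&` V k.-1) (x - f)).

Definition steps (k : nat) : set A :=
  if k is k'.+1 then dyadic_ball m k `&` [set a - b | a in F k & b in F k'] else F 0.

Definition dyadic_steps (k : nat) : set A :=
  [set c *+ 2 ^ j | c in steps k & j in `I_(k + m).+1].

Definition polar_set : set A := [set 0] `|` \bigcup_k dyadic_steps k.

Lemma polar_set_sub : polar_set `<=` D.
Proof.
move=> _ [->|[k _ [c ck [j _ <-]]]]; first exact: subgroup0.
apply: subgroupMn => //; move: ck; rewrite /steps; case: k => [|k]; first exact: F_D.
by case=> _ [a Fa [b Fb <-]]; apply: subgroupB => //; [exact: (F_D Fa) | exact: (F_D Fb)].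
Qed.

Lemma compact_polar_set : compact polar_set.
Proof.
apply: compact_setU1_bigcup => [k|U /nbhs0_ball0 [n nU]].
  apply: finite_image2 => //; rewrite /steps; case: k => [|k] //.
  apply: (@sub_finite_set _ _ [set a - b | a in F k.+1 & b in F k]).
    by move=> c [].
  exact: finite_image2.
exists n => -[//|k] nk _ [c [Zc _] [j jle <-]].
by apply/nU/(ball0_le (ltnW nk))/Zc; rewrite -ltnS.
Qed.

Section Net.
Variables (x : A) (f : nat -> A).
Hypothesis f_net : forall k, F k (f k) /\ (V k `&` V k.-1) (x - f k).

Lemma net_cluster (N : set A) : nbhs x N -> exists k, N (f k).
Proof.
move=> nN; have : nbhs 0 [set z | N (x - z)].
  by apply: continuous_subl; rewrite subr0.
case/nbhs0_ball0 => k hk; exists k.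
have [_ [Vk _]] := f_net k; have := hk _ (V_ball Vk); by rewrite /= subKr.
Qed.

Definition net_steps (k : nat) : A := if k is k'.+1 then f k'.+1 - f k' else f 0.

Lemma net_steps_sum k : f k = \sum_(i < k.+1) net_steps i.
Proof.
elim: k => [|k IH]; first by rewrite big_ord1.
by rewrite big_ord_recr /= -IH addrC subrK.
Qed.

Lemma net_steps_in k : steps k (net_steps k).
Proof.
case: k => [|k] /=; first by case: (f_net 0).
split; last by exists (f k.+1); [case: (f_net k.+1) | exists (f k) => //; case: (f_net k)].
have [_ [Vk _]] := f_net k; have [_ [_ Vk']] := f_net k.+1.
by have := V_sub Vk Vk'; rewrite opprB addrC addrA subrK.
Qed.

Lemma polar_net (eps : R) (g : A -> T) : 1 / 2 ^+ m < eps ->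
  {morph g : y z / y + z} -> (forall l, polar_set l -> tnorm (g l) < 4^-1) ->
  forall k, tnorm (g (f k)) <= eps.
Proof.
move=> m_eps gD g_small k.
have step_small i : tnorm (g (net_steps i)) * 2 ^+ i <= eps / 2.
  have : tnorm (g (net_steps i)) * 2 ^+ (i + m) <= 4^-1.
    apply: tnorm_doubling => j jle; rewrite -morphDMn //; apply: g_small.
    by right; exists i => //; exists (net_steps i); [exact: net_steps_in | exists j].
  have p2m : 0 < (2 : R) ^+ m by rewrite exprn_gt0.
  rewrite ltr_pdivrMr // in m_eps.
  have eps0 : 0 < eps by nra.
  have := tnorm_ge0 (g (net_steps i)); have : 0 < (2 : R) ^+ i by rewrite exprn_gt0.
  rewrite exprD; nra.
rewrite net_steps_sum (big_morph g gD (morphD0 gD)).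
by have := tnorm_sum_geometric step_small k.+1; rewrite mulrC divfK.
Qed.

End Net.

Lemma polar_set_polar (eps : R) (g : A -> T) : 1 / 2 ^+ m < eps ->
  {morph g : y z / y + z} -> continuous g ->
  (forall l, polar_set l -> tnorm (g l) < 4^-1) -> forall x, K x -> tnorm (g x) <= eps.
Proof.
move=> m_eps gD g_cont g_small x Kx.
have /choice [f f_net] : forall k, exists f, F k f /\ (V k `&` V k.-1) (x - f).
  by move=> k; have [f Ff Vf] := F_net k Kx; exists f.
apply/ler_addgt0Pr => e e0.
have [k /= gk] := net_cluster f_net (nbhs_tnorm (g_cont x) e0).
have := polar_net f_net m_eps gD g_small k.
have := tnormD (g (f k)) (g x - g (f k)); rewrite addrC subrK tnormBC.
lra.
Qed.

End Construction.

Lemma compact_polar_approximation (K : set A) (eps : R) : compact K -> 0 < eps ->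
  exists2 L : set A, L `<=` D /\ compact L &
    forall g : A -> T, {morph g : x y / x + y} -> continuous g ->
      (forall l, L l -> tnorm (g l) < 4^-1) -> forall x, K x -> tnorm (g x) <= eps.
Proof.
move=> cK eps0.
have [m _ /(_ m (leqnn m)) m_eps] := near_infty_natSinv_expn_lt (PosNum eps0).
have /choice [V V_spec] : forall k, exists V : set A,
    [/\ nbhs 0 V, V `<=` ball0 k & forall a b, V a -> V b -> dyadic_ball m k.+1 (a - b)].
  move=> k; have := @sub_continuous A (0, 0) (dyadic_ball m k.+1); rewrite /= subrr.
  move=> /(_ (nbhs_dyadic_ball m k.+1)) [[P Q] /= [nP nQ] PQ].
  exists (P `&` Q `&` ball0 k); split.
  - by apply: filterI; [exact: filterI | exact: nbhs_ball0].
  - by move=> y [].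
  - by move=> a b [[Pa _] _] [[_ Qb] _]; exact: (PQ (a, b)).
have /choice [F F_spec] : forall k, exists F : set A, (finite_set F /\ F `<=` D) /\
    forall x, K x -> exists2 f, F f & (V k `&` V k.-1) (x - f).
  move=> k; have [nVk _ _] := V_spec k; have [nVk' _ _] := V_spec k.-1.
  have [Fk Fk_spec Fk_net] := dense_finite_net denseD cK (filterI nVk nVk').
  by exists Fk.
have F_fin k : finite_set (F k) by case: (F_spec k) => -[].
have F_D k : F k `<=` D by case: (F_spec k) => -[].
exists (polar_set m F); first by split; [exact: polar_set_sub | exact: compact_polar_set].
move=> g gD g_cont g_small x Kx.
apply: (@polar_set_polar K m V F _ _ _ eps g m_eps gD g_cont g_small x Kx).
- by move=> k; case: (V_spec k).
- by move=> k a b; case: (V_spec k) => _ _; apply.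
- by move=> k y Ky; case: (F_spec k) => _; apply.
Qed.

End PolarApproximation.

Section Restriction.
Variables (R : realType) (A : topologicalZmodType) (D : set A).
Local Notation T := (torus R).
Local Notation sD := (set_type D).

Lemma compact_set_val_preimage (L : set A) : L `<=` D -> compact L ->
  compact (set_val @^-1` L : set sD).
Proof.
move=> LD cL G PG GL.
have [p [Lp cp]] := cL _ (fmap_proper_filter set_val PG) GL.
exists (in_sub (LD p Lp)); split => // E B GE /nbhs_set_typeP [V nV hV].
have : (set_val @ G) (set_val @` E) by apply: (@filterS _ G _ E) => // e Ee; exists e.
by move=> /cp /(_ nV) [_ [[e Ee <-] Ve]]; exists e; split => //; exact: hV.
Qed.

Lemma is_character_restriction (chi : A -> T) : is_character chi ->
  is_character_on (fun d : sD => chi (set_val d)).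
Proof.
move=> [chi_cont chiD]; split=> [d|x y z ->]; last by rewrite chiD.
by apply: continuous_comp; [exact: set_val_continuous | exact: chi_cont].
Qed.

Lemma restriction_continuous : continuous (@restriction R A D).
Proof.
move=> chi.
have FF : Filter (@restriction R A D @ nbhs (chi : {compact-open, A -> T})).
  exact: fmap_filter.
apply: (proj2 (@compact_open_cvgP sD T _ (@restriction R A D chi) FF)).
move=> K O cK oO KO.
have cK' : compact (set_val @` K).
  by apply: continuous_compact => //; apply: continuous_subspaceT; exact: set_val_continuous.
have : nbhs (chi : {compact-open, A -> T}) [set h | h @` (set_val @` K) `<=` O].
  apply: open_nbhs_nbhs; split; first exact: compact_open_open.
  by move=> _ [_ [d Kd <-] <-]; apply: KO; exists d.
by apply: filterS => h hh _ [d Kd <-]; apply: hh; exists (set_val d).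
Qed.

Hypotheses (subD : subgroup D) (denseD : dense D).

Lemma is_character_extension (psi : sD -> T) : is_character_on psi ->
  is_character (extension psi).
Proof. by case=> psi_cont psi_hom; split; [exact: extension_continuous | exact: extensionD]. Qed.

Lemma extension_restriction (chi : A -> T) : is_character chi ->
  extension (@restriction R A D chi) = chi.
Proof.
move=> chi_char; have [r_cont r_hom] := is_character_restriction chi_char.
by case: chi_char => chi_cont _; exact: extension_unique.
Qed.

Lemma restriction_extension (psi : sD -> T) : is_character_on psi ->
  @restriction R A D (extension psi) = psi.
Proof. by case=> psi_cont psi_hom; apply/funext => d; exact: extension_set_val. Qed.

Variable dist : A -> A -> R.
Hypothesis nbhs_dist : forall (x : A) (U : set A),
  nbhs x U <-> exists2 e : R, 0 < e & [set y | dist x y < e] `<=` U.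

(* Near [psi0], [extension psi - extension psi0] is a continuous character that
   is small on the compact set provided by [compact_polar_approximation]. *)
Lemma extension_continuous_dual :
  {within @dual_on R A D, continuous (fun psi => extension psi : {compact-open, A -> T})}.
Proof.
apply/subspace_continuousP => psi0 [psi0_cont psi0_hom].
apply/compact_open_cvgP => K O cK oO KO.
have [e e0 eO] := torus_lebesgue_number (extension_continuous subD denseD psi0_cont psi0_hom)
  cK oO KO.
have e2 : 0 < e / 2 by rewrite divr_gt0.
have [L [LD cL] L_polar] := compact_polar_approximation subD denseD nbhs_dist cK e2.
have quarter_gt0 : 0 < 4^-1 :> R by rewrite invr_gt0.
have := near_compact_open_uniform psi0_cont (compact_set_val_preimage LD cL) quarter_gt0.
rewrite /within /=; apply: filterS => psi psi_near [psi_cont psi_hom] _ [x Kx <-].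
apply: (eO x Kx); rewrite /tball /=.
pose g y := extension psi y - extension psi0 y.
have gD : {morph g : y z / y + z}.
  by move=> y z; rewrite /g !extensionD // opprD addrACA.
have g_cont : continuous g.
  by move=> y; apply: torus_cvgB; exact: extension_continuous.
have g_small l : L l -> tnorm (g l) < 4^-1.
  move=> Ll; rewrite /g -(in_subK (LD l Ll)) !extension_set_val //.
  by apply: psi_near.
by have := L_polar g gD g_cont g_small x Kx; lra.
Qed.

End Restriction.

Theorem mainTheorem12 (R : realType) (A : topologicalZmodType) (D : set A) :
  metrizable R A -> subgroup D -> dense D ->
  [/\ @restriction R A D @` @dual R A `<=` @dual_on R A D,
      (forall chi psi, chi \in @dual R A -> psi \in @dual R A ->
         @restriction R A D (chi \+ psi) = @restriction R A D chi \+ @restriction R A D psi),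
      {within @dual R A, continuous @restriction R A D} &
      exists s : {compact-open, set_type D -> torus R} ->
                 {compact-open, A -> torus R},
        [/\ s @` @dual_on R A D `<=` @dual R A,
            {in @dual R A, cancel (@restriction R A D) s},
            {in @dual_on R A D, cancel s (@restriction R A D)} &
            {within @dual_on R A D, continuous s}]].
Proof.
move=> [dist [_ _ _ _ nbhs_dist]] subD denseD; split.
- by move=> _ [chi chi_char <-]; exact: is_character_restriction.
- by [].
- by apply: continuous_subspaceT; exact: restriction_continuous.
exists (fun psi => extension psi); split.
- by move=> _ [psi psi_char <-]; exact: is_character_extension.
- by move=> chi /set_mem chi_char; exact: extension_restriction.
- by move=> psi /set_mem psi_char; exact: restriction_extension.
- exact: extension_continuous_dual nbhs_dist.
Qed.
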